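(* Let $S$ be a finite set, $f:S\to\mathbb{R}$ a fitness function to be maximized, $S_{\mathrm{opt}}$ the set of maximizers of $f$ and $S_{\mathrm{non}}=S\setminus S_{\mathrm{opt}}$ (assumed nonempty). Let $s1,s2$ be mutation operators on $S$ such that $s2$ is complementary to $s1$ on $f$, i.e. for every $x\in S_{\mathrm{non}}$ with $P_{s1}(x,x)=\rho(\mathbf{T}_{s1})$ it holds that $P_{s2}(x,x)<\rho(\mathbf{T}_{s1})$. Then there exists a strategy probability distribution $\mathbf{q}$ over $\{s1,s2\}$ such that the homogeneous mixed strategy (1+1) EA(s1,s2) with distribution $\mathbf{q}$ satisfies $R(\mathbf{T}_{\mathbf{q}})>R(\mathbf{T}_{s1})$ and $T(\mathbf{T}_{\mathbf{q}})<T(\mathbf{T}_{s1})$; i.e. its asymptotic convergence rate is larger and its asymptotic hitting time is shorter than those of the pure strategy EA(s1).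
   Context: A mutation operator $s$ on the finite set $S$ is a stochastic matrix $\mathbf{P}_{m,s}=[P_{m,s}(x,y)]_{x,y\in S}$ (probability that mutating $x$ yields $y$). Strict elitist selection between parent $x$ and offspring $y$ keeps $y$ if $f(y)>f(x)$ and keeps $x$ otherwise. The pure strategy (1+1) EA EA($s$) repeatedly mutates the current individual by $s$ and applies strict elitist selection; it is a homogeneous Markov chain on $S$ with transition probabilities $P_s(x,y)=P_{m,s}(x,y)$ if $f(y)>f(x)$, $P_s(x,y)=0$ if $y\neq x$ and $f(y)\le f(x)$, and $P_s(x,x)=1-\sum_{y:\,f(y)>f(x)}P_{m,s}(x,y)$. A (state-dependent) strategy probability distribution over operators $s1,\dots,s\kappa$ is a map $x\mapsto \mathbf{q}(x)=(q_{s1}(x),\dots,q_{s\kappa}(x))$ with $q_{sk}(x)\in[0,1]$ and $\sum_k q_{sk}(x)=1$. The homogeneous mixed strategy (1+1) EA with distribution $\mathbf{q}$ at each generation, with current individual $x$, chooses operator $sk$ with probability $q_{sk}(x)$, mutates $x$ by it, and applies strict elitist selection; its transition matrix is $P_{\mathbf{q}}(x,y)=\sum_{k}q_{sk}(x)P_{sk}(x,y)$. For such an EA with transition matrix $\mathbf{P}$, let $\mathbf{T}$ denote the submatrix $[P(x,y)]_{x,y\in S_{\mathrm{non}}}$ and $\rho(\mathbf{T})$ its spectral radius. The asymptotic convergence rate is $R(\mathbf{T})=-\ln\rho(\mathbf{T})$ (with $-\ln 0=+\infty$). The asymptotic hitting time is $T(\mathbf{T})=\rho((\mathbf{I}-\mathbf{T})^{-1})$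 if $\rho(\mathbf{T})<1$ and $T(\mathbf{T})=+\infty$ if $\rho(\mathbf{T})=1$. Subscripts $\mathbf{q}$ and $s$ indicate the matrices of the mixed strategy EA and of the pure strategy EA($s$), respectively. *)

From HB Require Import structures.
From mathcomp Require Import all_boot all_order all_algebra.
From mathcomp Require Import all_classical all_reals.
From mathcomp Require Import ereal exp.
From mathcomp.real_closed Require Import complex.
Set Implicit Arguments. Unset Strict Implicit. Unset Printing Implicit Defensive.
Import Order.TTheory GRing.Theory Num.Theory.
Local Open Scope ring_scope.
Local Open Scope classical_set_scope.

Section EA.
Variable R : realType.

Definition spectral_radius (n : nat) (A : 'M[R]_n) : R :=
  sup [set ComplexField.Normc.normc z | z in
        [set z : R[i] | eigenvalue (map_mx (real_complex R) A) z]].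

Definition conv_rate (n : nat) (T : 'M[R]_n) : \bar R :=
  if spectral_radius T == 0 then +oo%E else (- ln (spectral_radius T))%:E.

(* asymptotic hitting time  T(T) = rho((I - T)^-1) if rho(T) < 1, +oo otherwise
   (for the substochastic matrices considered, rho(T) <= 1) *)
Definition hitting_time (n : nat) (T : 'M[R]_n) : \bar R :=
  if spectral_radius T < 1 then (spectral_radius (invmx (1%:M - T)))%:E
  else +oo%E.

Variable S : finType.
Variable f : S -> R.

Definition S_opt : {set S} := [set x | [forall y, f y <= f x]].
Definition S_non : {set S} := ~: S_opt.

Definition stochastic (Pm : S -> S -> R) : Prop :=
  (forall x y, 0 <= Pm x y) /\ (forall x, \sum_(y : S) Pm x y = 1).

(* transition probabilities of the pure strategy (1+1) EA(s) with strict elitist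
   selection *)
Definition ea_trans (Pm : S -> S -> R) (x y : S) : R :=
  if f x < f y then Pm x y
  else if y == x then 1 - \sum_(z : S | f x < f z) Pm x z
  else 0.

Definition mixed_trans (q1 q2 : S -> R) (Pm1 Pm2 : S -> S -> R) (x y : S) : R :=
  q1 x * ea_trans Pm1 x y + q2 x * ea_trans Pm2 x y.

(* restriction T of a transition matrix to S_non, indexed via enum_val *)
Definition Tmat (P : S -> S -> R) : 'M[R]_#|S_non| :=
  \matrix_(i, j) P (enum_val i) (enum_val j).

Definition complementary (Pm1 Pm2 : S -> S -> R) : Prop :=
  forall x, x \in S_non ->
    ea_trans Pm1 x x = spectral_radius (Tmat (ea_trans Pm1)) ->
    ea_trans Pm2 x x < spectral_radius (Tmat (ea_trans Pm1)).

End EA.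

(** Under strict elitist selection a move x -> y with y <> x happens only if
    f x < f y, so once S_non is listed by increasing fitness the matrix T is
    triangular: its eigenvalues are the diagonal entries P(x,x), rho(T) is the
    largest of them and rho((I - T)^-1) = 1 / (1 - rho(T)).  Using s2 exactly at
    the states where P_s1(x,x) = rho(T_s1), and s1 elsewhere, pushes every
    diagonal entry strictly below rho(T_s1); hence rho(T_q) < rho(T_s1), which
    yields both the larger convergence rate and the shorter hitting time. *)

From HB Require Import structures.
From mathcomp Require Import all_boot all_order all_algebra all_fingroup.
From mathcomp Require Import all_classical all_reals.
From mathcomp Require Import ereal exp.
From mathcomp.real_closed Require Import complex.
Import Order.TTheory GRing.Theory Num.Theory.
Local Open Scope ring_scope.
Set Implicit Arguments. Unset Strict Implicit.

Section GradedMatrix.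
Variables (R : realType) (n : nat) (g : 'I_n -> R).

(* Triangular up to the reordering of the indices by increasing [g]. *)
Definition graded_mx (F : nzRingType) (B : 'M[F]_n) :=
  forall i j, i != j -> B i j != 0 -> g i < g j.

Lemma det_graded (F : comNzRingType) (B : 'M[F]_n) :
  graded_mx B -> \det B = \prod_i B i i.
Proof.
move=> gB; rewrite /determinant (bigD1 (1%g : 'S_n)) //= odd_perm1 expr0 mul1r.
rewrite [X in _ + X]big1 ?addr0; first by apply: eq_bigr => i _; rewrite perm1.
move=> s s_neq1.
case: (boolP [forall i, B i (s i) != 0]) => [/forallP nzB|]; last first.
  by move/forallPn => [i /negPn/eqP Bi0]; rewrite (bigD1 i) //= Bi0 !mul0r mulr0.
(* [g] cannot strictly increase along every cycle of a nontrivial permutation. *)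
have g_le i : g i <= g (s i).
  by case: (eqVneq (s i) i) => [->//|ne]; apply/ltW/gB; rewrite // eq_sym.
have sum_inc0 : \sum_i (g (s i) - g i) = 0.
  by rewrite sumrB [X in _ - X](reindex_inj (@perm_inj _ s)) subrr.
have inc0 := psumr_eq0P (fun i _ => etrans (subr_ge0 _ _) (g_le i)) sum_inc0.
exfalso; move/negP: s_neq1; apply; apply/eqP/permP => i; rewrite perm1.
apply/eqP; apply/negPn/negP => ne.
by have := gB i (s i) ltac:(by rewrite eq_sym) (nzB i); rewrite -subr_gt0 inc0 ?ltxx.
Qed.

Lemma graded_subr_scalar (F : nzRingType) (B : 'M[F]_n) a :
  graded_mx B -> graded_mx (B - a%:M).
Proof. by move=> gB i j ij; rewrite !mxE (negbTE ij) mulr0n subr0; apply: gB. Qed.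

Lemma graded_scalar_subr (F : nzRingType) (B : 'M[F]_n) a :
  graded_mx B -> graded_mx (a%:M - B).
Proof.
by move=> gB i j ij; rewrite !mxE (negbTE ij) mulr0n sub0r oppr_eq0; apply: gB.
Qed.

Lemma graded_map_mx (F K : fieldType) (phi : {rmorphism F -> K}) (B : 'M[F]_n) :
  graded_mx B -> graded_mx (map_mx phi B).
Proof. by move=> gB i j ij; rewrite mxE fmorph_eq0; apply: gB. Qed.

Lemma eigenvalue_graded (F : fieldType) (B : 'M[F]_n) a :
  graded_mx B -> eigenvalue B a = [exists i, B i i == a].
Proof.
move=> gB.
rewrite /eigenvalue /eigenspace kermx_eq0 row_free_unit unitmxE unitfE negbK.
rewrite (det_graded (graded_subr_scalar (a := a) gB)) prodf_seq_eq0.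
apply/hasP/existsP => [[i _]|[i Bi]].
  by rewrite !mxE eqxx mulr1n subr_eq0 => Bi; exists i.
by exists i; rewrite ?mem_index_enum // !mxE eqxx mulr1n subr_eq0.
Qed.

Lemma unitmx_graded (F : fieldType) (B : 'M[F]_n) :
  graded_mx B -> (B \in unitmx) = [forall i, B i i != 0].
Proof.
move=> gB; rewrite unitmxE unitfE (det_graded gB) prodf_seq_neq0.
apply/allP/forallP => [nzB i|nzB i _]; last exact: nzB.
exact: nzB (mem_index_enum i).
Qed.

End GradedMatrix.

Lemma eigenvalue_invmx (F : fieldType) n (B : 'M[F]_n) z :
  B \in unitmx -> eigenvalue (invmx B) z = (z != 0) && eigenvalue B z^-1.
Proof.
move=> uB; apply/eigenvalueP/andP => [[v vB nz_v]|[nz /eigenvalueP [v vB nz_v]]].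
  have v_eq : v = z *: (v *m B) by rewrite scalemxAl -vB mulmxKV.
  have nz : z != 0 by apply: contraNneq nz_v => z0; rewrite v_eq z0 scale0r.
  split => //; apply/eigenvalueP; exists v => //.
  by rewrite {2}v_eq scalerA mulVf // scale1r.
exists v => //.
have v_eq : v = z^-1 *: (v *m invmx B) by rewrite scalemxAl -vB mulmxK.
by rewrite {2}v_eq scalerA divff // scale1r.
Qed.

Section SpectralRadius.
Variables (R : realType) (n : nat) (g : 'I_n -> R).
Notation rc := (real_complex R).
Local Open Scope classical_set_scope.

Lemma normc_real_complex (x : R) : ComplexField.Normc.normc (rc x) = `|x|.
Proof. by rewrite /ComplexField.Normc.normc /= expr0n /= addr0 sqrtr_sqr. Qed.

Lemma spectral_radius_real_spectrum (A : 'M[R]_n) (h : 'I_n -> R) j :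
    (forall z, eigenvalue (map_mx rc A) z <-> exists i, z = rc (h i)) ->
    (forall i, `|h i| <= `|h j|) ->
  spectral_radius A = `|h j|.
Proof.
move=> spec h_le; rewrite /spectral_radius.
set E := (X in sup X).
have Ej : E `|h j|.
  by exists (rc (h j)); [apply/spec; exists j | exact: normc_real_complex].
have ubE : ubound E `|h j|.
  by move=> y [z /spec [i ->] <-]; rewrite normc_real_complex.
apply/eqP; rewrite eq_le; apply/andP; split; first by apply: ge_sup => //; exists `|h j|.
by apply: sup_upper_bound => //; split; exists `|h j|.
Qed.

Lemma spectral_radius_graded (A : 'M[R]_n) j : graded_mx g A ->
  (forall i, `|A i i| <= `|A j j|) -> spectral_radius A = `|A j j|.
Proof.
move=> gA A_le; apply: (spectral_radius_real_spectrum (h := fun i => A i i)) => // z.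
rewrite (eigenvalue_graded _ (graded_map_mx (phi := rc) gA)); split.
  by case/existsP => i /eqP <-; exists i; rewrite mxE.
by case=> i ->; apply/existsP; exists i; rewrite mxE.
Qed.

Lemma spectral_radius_graded_ge0 (A : 'M[R]_n) j : graded_mx g A ->
    (forall i, 0 <= A i i) -> (forall i, A i i <= A j j) ->
  spectral_radius A = A j j.
Proof.
move=> gA A_ge0 A_le; rewrite (spectral_radius_graded (j := j) gA) ?ger0_norm // => i.
by rewrite !ger0_norm.
Qed.

Lemma spectral_radius_inv_graded (A : 'M[R]_n) j : graded_mx g A ->
    (forall i, A i i <= A j j) -> A j j < 1 ->
  spectral_radius (invmx (1%:M - A)) = (1 - A j j)^-1.
Proof.
move=> gA A_le Aj_lt1.
have subA_gt0 i : 0 < 1 - A i i by rewrite subr_gt0; apply: le_lt_trans (A_le i) Aj_lt1.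
have gC := graded_map_mx (phi := real_complex R) (graded_scalar_subr (a := 1) gA).
have uC : map_mx rc (1%:M - A) \in unitmx.
  rewrite (unitmx_graded gC); apply/forallP => i.
  by rewrite !mxE fmorph_eq0 eqxx mulr1n lt0r_neq0.
rewrite -[RHS]gtr0_norm ?invr_gt0 //.
apply: (spectral_radius_real_spectrum (h := fun i => (1 - A i i)^-1)).
  move=> z; rewrite map_invmx eigenvalue_invmx // (eigenvalue_graded _ gC); split.
    case/andP=> nz /existsP [i /eqP zi]; exists i.
    by move: zi; rewrite !mxE eqxx mulr1n fmorphV => zi; rewrite -[z]invrK -zi.
  case=> i ->; rewrite fmorph_eq0 invr_eq0 lt0r_neq0 //=.
  by apply/existsP; exists i; rewrite fmorphV invrK !mxE eqxx mulr1n.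
by move=> i; rewrite !gtr0_norm ?invr_gt0 // lef_pV2 ?posrE // lerB.
Qed.

Lemma exists_diag_max (i0 : 'I_n) (A : 'M[R]_n) : exists j, forall i, A i i <= A j j.
Proof.
case: (@arg_maxP _ _ 'I_n i0 xpredT (fun i => A i i) isT) => j _ A_le.
by exists j => i; apply: A_le.
Qed.

Lemma rates_graded_diag_lt (i0 : 'I_n) (A B : 'M[R]_n) :
    graded_mx g A -> graded_mx g B ->
    (forall i, 0 <= A i i <= 1) -> (forall i, 0 <= B i i) ->
    (forall i, B i i < spectral_radius A) ->
  (conv_rate A < conv_rate B)%E /\ (hitting_time B < hitting_time A)%E.
Proof.
move=> gA gB A01 B_ge0 B_lt.
have A_ge0 i : 0 <= A i i by case/andP: (A01 i).
have [jA A_le] := exists_diag_max i0 A; have [jB B_le] := exists_diag_max i0 B.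
have rhoA := spectral_radius_graded_ge0 gA A_ge0 A_le.
have rhoB := spectral_radius_graded_ge0 gB B_ge0 B_le.
have BA_lt : B jB jB < A jA jA by rewrite -rhoA.
have A_gt0 : 0 < A jA jA := le_lt_trans (B_ge0 jB) BA_lt.
have B_lt1 : B jB jB < 1 by apply: lt_le_trans BA_lt _; case/andP: (A01 jA).
split.
  rewrite /conv_rate rhoA rhoB (negbTE (lt0r_neq0 A_gt0)).
  case: eqP => [_|/eqP B_neq0]; first exact: ltry.
  by rewrite lte_fin ltrN2 ltr_ln ?posrE // lt_neqAle eq_sym B_neq0 B_ge0.
rewrite /hitting_time rhoA rhoB B_lt1; case: ifP => [A_lt1|_]; last exact: ltry.
rewrite (spectral_radius_inv_graded gA A_le A_lt1).
rewrite (spectral_radius_inv_graded gB B_le B_lt1) lte_fin.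
by rewrite ltf_pV2 ?posrE ?subr_gt0 // ltrD2l ltrN2.
Qed.

End SpectralRadius.

Section ElitistEA.
Variables (R : realType) (S : finType) (f : S -> R).

Lemma Tmat_graded (P : S -> S -> R) :
    (forall x y, x != y -> P x y != 0 -> f x < f y) ->
  graded_mx (fun i => f (enum_val i)) (Tmat f P).
Proof.
move=> P_up i j ij; rewrite mxE; apply: P_up.
by apply: contra ij => /eqP /enum_val_inj ->.
Qed.

Lemma ea_trans_up (P : S -> S -> R) x y :
  x != y -> ea_trans f P x y != 0 -> f x < f y.
Proof. by move=> xy; rewrite /ea_trans (eq_sym y x) (negbTE xy); case: ifP; rewrite ?eqxx. Qed.

Lemma mixed_trans_up q1 q2 P1 P2 x y :
  x != y -> mixed_trans f q1 q2 P1 P2 x y != 0 -> f x < f y.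
Proof.
move=> xy; apply: contraNT => fxy.
have ea0 P : ea_trans f P x y = 0 by rewrite /ea_trans (negbTE fxy) (eq_sym y x) (negbTE xy).
by rewrite /mixed_trans !ea0 !mulr0 addr0.
Qed.

Lemma ea_trans_diag_bounds (P : S -> S -> R) x :
  stochastic P -> 0 <= ea_trans f P x x <= 1.
Proof.
case=> P_ge0 P_sum1; rewrite /ea_trans ltxx eqxx.
have up_le1 : \sum_(z | f x < f z) P x z <= 1.
  rewrite -(P_sum1 x) [X in _ <= X](bigID (fun z => f x < f z)) /= lerDl.
  exact: sumr_ge0.
by rewrite subr_ge0 up_le1 lerBlDr lerDl sumr_ge0.
Qed.

Lemma mixed_trans_diag_ge0 q1 q2 P1 P2 x :
    stochastic P1 -> stochastic P2 -> 0 <= q1 x -> 0 <= q2 x ->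
  0 <= mixed_trans f q1 q2 P1 P2 x x.
Proof.
move=> st1 st2 q1_ge0 q2_ge0.
have /andP[d1_ge0 _] := ea_trans_diag_bounds x st1.
have /andP[d2_ge0 _] := ea_trans_diag_bounds x st2.
by rewrite addr_ge0 ?mulr_ge0.
Qed.

Definition off_peak_weight (P : S -> S -> R) (r : R) (x : S) : R :=
  if ea_trans f P x x == r then 0 else 1.

Lemma off_peak_weight_dist P r x :
  let q := off_peak_weight P r x in 0 <= q /\ 0 <= 1 - q /\ q + (1 - q) = 1.
Proof.
rewrite /= [off_peak_weight P r x + _]addrC subrK /off_peak_weight.
by case: ifP => _; rewrite ?subr0 ?subrr ?ler01 ?lexx.
Qed.

Lemma off_peak_mixed_diag_lt P1 P2 r x :
    ea_trans f P1 x x <= r -> (ea_trans f P1 x x = r -> ea_trans f P2 x x < r) ->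
  mixed_trans f (off_peak_weight P1 r) (fun y => 1 - off_peak_weight P1 r y) P1 P2 x x < r.
Proof.
move=> d1_le compl; rewrite /mixed_trans /off_peak_weight.
case: eqP => [d1_r|/eqP d1_neq]; first by rewrite subr0 mul0r add0r mul1r compl.
by rewrite subrr mul0r addr0 mul1r lt_neqAle d1_neq d1_le.
Qed.

End ElitistEA.

Theorem theorem3 (R : realType) (S : finType) (f : S -> R)
    (Pm1 Pm2 : S -> S -> R) :
  (exists x : S, x \in S_non f) ->
  stochastic Pm1 -> stochastic Pm2 ->
  complementary f Pm1 Pm2 ->
  exists q1 q2 : S -> R,
    (forall x, 0 <= q1 x /\ 0 <= q2 x /\ q1 x + q2 x = 1) /\
    (conv_rate (Tmat f (mixed_trans f q1 q2 Pm1 Pm2)) >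
       conv_rate (Tmat f (ea_trans f Pm1)))%E /\
    (hitting_time (Tmat f (mixed_trans f q1 q2 Pm1 Pm2)) <
       hitting_time (Tmat f (ea_trans f Pm1)))%E.
Proof.
move=> [x0 x0_non] st1 st2 compl.
set T1 := Tmat f (ea_trans f Pm1); set rho1 := spectral_radius T1.
pose q1 := off_peak_weight f Pm1 rho1; pose q2 x := 1 - q1 x.
have q_dist x : 0 <= q1 x /\ 0 <= q2 x /\ q1 x + q2 x = 1 by apply: off_peak_weight_dist.
exists q1, q2; split=> //.
have gT1 : graded_mx (fun i => f (enum_val i)) T1.
  by apply: Tmat_graded => x y; apply: ea_trans_up.
have diag1 i : 0 <= T1 i i <= 1 by rewrite mxE ea_trans_diag_bounds.
set i0 := enum_rank_in x0_non x0.
have [j1 T1_le] := exists_diag_max i0 T1.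
have T1_le_rho i : T1 i i <= rho1.
  by rewrite /rho1 (spectral_radius_graded_ge0 gT1 _ T1_le) // => k; case/andP: (diag1 k).
apply: rates_graded_diag_lt i0 _ _ gT1 _ diag1 _ _.
- by apply: Tmat_graded => x y; apply: mixed_trans_up.
- move=> i; have [q1_ge0 [q2_ge0 _]] := q_dist (enum_val i).
  by rewrite mxE mixed_trans_diag_ge0.
- move=> i; rewrite mxE; apply: off_peak_mixed_diag_lt; last exact: compl (enum_valP i).
  by have := T1_le_rho i; rewrite mxE.
Qed.
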